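(* Let $(G,c)$ be a metric TSP instance with $n\ge 3$ cities, let $T^*$ be a shortest tour and let $L=c(T^* )$. Then every 2-optimal tour $T'$ satisfies $$2\sum_{e\in E(T')} c(e)^2 \le L^2 .$$
   Context: A metric TSP instance with $n$ cities consists of a complete undirected graph $G$ on $n$ vertices together with $c: E(G)\to\mathbb{R}_{\ge 0}$ satisfying the triangle inequality $c(x,y)+c(y,z)\ge c(x,z)$. A tour is a cycle containing all vertices; its length is the sum of its edge lengths. Tours are regarded as oriented cycles. A tour is 2-optimal if for all pairs of edges $(a,b),(x,y)$ of the oriented tour, $c(a,x)+c(b,y)\ge c(a,b)+c(x,y)$. *)

From HB Require Import structures.
From mathcomp Require Import all_boot all_order all_algebra.
Set Implicit Arguments. Unset Strict Implicit. Unset Printing Implicit Defensive.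
Import Order.TTheory GRing.Theory Num.Theory.
Local Open Scope ring_scope.

(* Cities are 'I_n; c x y is the length of the edge {x,y} (x <> y).
   Diagonal values c x x are meaningless (no loops) and never constrained/used. *)
Definition metric (R : realFieldType) (n : nat) (c : 'I_n -> 'I_n -> R) : Prop :=
  [/\ forall x y : 'I_n, x != y -> c x y = c y x,
      forall x y : 'I_n, x != y -> 0 <= c x y &
      forall x y z : 'I_n, x != y -> y != z -> x != z -> c x z <= c x y + c y z].

(* An oriented tour is given by a bijection t : 'I_n -> 'I_n listing the cities
   in cyclic order; its edges are (t i, t (i+1 mod n)) for i : 'I_n. *)
Definition is_tour (n : nat) (t : 'I_n -> 'I_n) : Prop := injective t.

Definition tour_len (R : realFieldType) (n : nat) (c : 'I_n -> 'I_n -> R)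
  (t : 'I_n -> 'I_n) : R := \sum_(i < n) c (t i) (t (ordS i)).

Definition tour_sqlen (R : realFieldType) (n : nat) (c : 'I_n -> 'I_n -> R)
  (t : 'I_n -> 'I_n) : R := \sum_(i < n) (c (t i) (t (ordS i))) ^+ 2.

Definition two_optimal (R : realFieldType) (n : nat) (c : 'I_n -> 'I_n -> R)
  (t : 'I_n -> 'I_n) : Prop :=
  forall i j : 'I_n, i != j ->
    c (t i) (t (ordS i)) + c (t j) (t (ordS j)) <= c (t i) (t j) + c (t (ordS i)) (t (ordS j)).

Definition shortest_tour (R : realFieldType) (n : nat) (c : 'I_n -> 'I_n -> R)
  (t : 'I_n -> 'I_n) : Prop :=
  is_tour t /\ forall t' : 'I_n -> 'I_n, is_tour t' -> tour_len c t <= tour_len c t'.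

From HB Require Import structures.
From mathcomp Require Import all_boot all_order all_algebra.
From mathcomp Require Import lra zify.
Set Implicit Arguments. Unset Strict Implicit. Unset Printing Implicit Defensive.
Import Order.TTheory GRing.Theory Num.Theory.
Local Open Scope ring_scope.

(* Lay the cities on a circle whose circumference L is the length of T*, at
   their arc-length positions along T*; walking along T* in either direction
   shows that c is dominated by the circular distance.  Over the tail a of each edge (a, b) of
   T' raise a tent of slope 1 and height c(a, b); its area is c(a, b)^2 because
   2 c(a, b) <= L.  At a point s of the circle, give each edge the interval of
   radius tent(s) around the position of its head b.  The triangle inequality
   and 2-optimality, c(a, b) + c(x, y) <= c(a, x) + c(b, y), make these
   intervals pairwise disjoint, so the tents add up to at most L/2 at s, and
   integrating over the circle gives 2 sum c(e)^2 <= L^2.  The integral is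
   replaced by a trapezoid sum over the city positions, which overestimates
   the area of each tent because every tent peaks at a city. *)

(* Innermost terms are split first, so that no case hypothesis mentions an
   unsplit [min], [max] or norm. *)
Ltac piecewise_free t :=
  lazymatch t with
  | context [`|_|] => fail
  | context [Order.max _ _] => fail
  | context [Order.min _ _] => fail
  | _ => idtac
  end.

Ltac case_piecewise :=
  repeat match goal with
  | |- context [`|?x|] => piecewise_free x; case: (ger0P x) => ?
  | |- context [Order.max ?x ?y] => piecewise_free (x, y); case: (lerP x y) => ?
  | |- context [Order.min ?x ?y] => piecewise_free (x, y); case: (lerP x y) => ?
  end.

Section CircleTents.
Variable R : realFieldType.
Implicit Types L g p s x y z d : R.

Definition circ_dist L x y := Num.min `|x - y| (L - `|x - y|).

Lemma circ_distC L x y : circ_dist L x y = circ_dist L y x.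
Proof. by rewrite /circ_dist distrC. Qed.

Lemma circ_distE L x y : x <= y -> circ_dist L x y = Num.min (y - x) (L - (y - x)).
Proof. by move=> xy; rewrite /circ_dist distrC ger0_norm ?subr_ge0. Qed.

Lemma circ_dist_ge0 L x y : 0 <= x <= L -> 0 <= y <= L -> 0 <= circ_dist L x y.
Proof. move=> /andP[? ?] /andP[? ?]; rewrite /circ_dist; case_piecewise; lra. Qed.

Lemma circ_dist_le_half L x y : 2 * circ_dist L x y <= L.
Proof. rewrite /circ_dist; case_piecewise; lra. Qed.

Lemma circ_dist_triangle L x y z : 0 <= x <= L -> 0 <= y <= L -> 0 <= z <= L ->
  circ_dist L x z <= circ_dist L x y + circ_dist L y z.
Proof.
move=> /andP[? ?] /andP[? ?] /andP[? ?]; rewrite /circ_dist; case_piecewise; lra.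
Qed.

Definition tent L g p s := Num.max (g - circ_dist L s p) 0.

(* [tent L g p s] as a function of the offset [d = |s - p|] in [0, L];
   [tent_profile_area] is its antiderivative vanishing at 0. *)
Definition tent_profile L g d := Num.max (g - d) 0 + Num.max (g - (L - d)) 0.

Definition tent_profile_area L g d :=
  (g ^+ 2 - Num.max (g - d) 0 ^+ 2) / 2 + Num.max (d - (L - g)) 0 ^+ 2 / 2.

Lemma tentE L g p s : 2 * g <= L -> 0 <= p <= L -> 0 <= s <= L ->
  tent L g p s = tent_profile L g `|s - p|.
Proof.
move=> ? /andP[? ?] /andP[? ?]; rewrite /tent /tent_profile /circ_dist.
case_piecewise; lra.
Qed.

Lemma tent_profile_area0 L g : 0 <= g -> 2 * g <= L -> tent_profile_area L g 0 = 0.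
Proof. move=> ? ?; rewrite /tent_profile_area; case_piecewise; nra. Qed.

Lemma tent_profile_areaC L g d : 0 <= g -> 2 * g <= L -> 0 <= d <= L ->
  tent_profile_area L g d + tent_profile_area L g (L - d) = g ^+ 2.
Proof. move=> ? ? /andP[? ?]; rewrite /tent_profile_area; case_piecewise; nra. Qed.

Lemma tent_profile_area_trapezoid L g x y :
  0 <= g -> 2 * g <= L -> 0 <= x -> x <= y -> y <= L ->
  tent_profile_area L g y - tent_profile_area L g x <=
  (y - x) * (tent_profile L g x + tent_profile L g y) / 2.
Proof.
move=> ? ? ? ? ?; rewrite /tent_profile_area /tent_profile; case_piecewise; nra.
Qed.

Lemma tent_ge0 L g p s : 0 <= tent L g p s.
Proof. by rewrite /tent le_max lexx orbT. Qed.

Lemma tent_le L g p s :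
  0 <= g -> 0 <= p <= L -> 0 <= s <= L -> tent L g p s <= g.
Proof.
move=> g0 pb sb; have := circ_dist_ge0 sb pb.
by rewrite /tent ge_max g0 andbT => ?; rewrite lerBlDr lerDl.
Qed.

End CircleTents.

Section CirclePacking.
Variables (R : realFieldType) (L : R) (P rho : nat -> R) (n : nat).
Hypotheses (L_ge0 : 0 <= L) (P_mono : {homo P : i j / (i <= j)%N >-> i <= j})
  (rho_ge0 : forall k, 0 <= rho k) (rho_le_half : forall k, 2 * rho k <= L)
  (rho_disjoint : forall k l, (k < l < n)%N -> 0 < rho k -> 0 < rho l ->
     rho k + rho l <= circ_dist L (P k) (P l)).

Lemma rho_gap k l : (k < l < n)%N -> 0 < rho k -> 0 < rho l ->
  rho k + rho l <= P l - P k /\ rho k + rho l <= L - (P l - P k).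
Proof.
move=> kln rk rl; have := rho_disjoint kln rk rl.
case/andP: kln => /ltnW/P_mono kl _.
by rewrite circ_distE // le_min => /andP.
Qed.

(* [f] and [l] are the first and last indices below [k] with positive radius. *)
Lemma packing_prefix k : (k <= n)%N ->
  (forall j, (j < k)%N -> rho j = 0) \/
  exists f l, [/\ (f <= l < k)%N, 0 < rho f, 0 < rho l &
                  \sum_(j < k) 2 * rho j <= rho f + rho l + (P l - P f)].
Proof.
elim: k => [|k IH] kn; first by left.
have {IH} := IH (ltnW kn); rewrite big_ord_recr /=.
have [rk | rk0] := ltrP 0 (rho k).
  case=> [rho0 | [f [l [/andP[fl lk] rf rl sum_le]]]].
    right; exists k, k; split => //; first by rewrite leqnn ltnSn.
    rewrite big1 ?add0r => [|j _]; last by rewrite rho0 ?mulr0.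
    lra.
  right; exists f, k; split => //; first by rewrite (leq_trans fl (ltnW lk)) ltnSn.
  have [gap _] := @rho_gap l k ltac:(by rewrite lk) rl rk.
  lra.
have {rk0} rk : rho k = 0 by apply/eqP; rewrite eq_le rk0 rho_ge0.
rewrite rk mulr0 addr0.
case=> [rho0 | [f [l [/andP[fl lk] rf rl sum_le]]]].
  by left => j; rewrite ltnS leq_eqVlt => /predU1P[->|/rho0].
by right; exists f, l; split => //; rewrite fl ltnS ltnW.
Qed.

Lemma circle_packing : \sum_(k < n) 2 * rho k <= L.
Proof.
case: (packing_prefix (leqnn n)) => [rho0 | [f [l [/andP[fl ln] rf rl sum_le]]]].
  by rewrite big1 // => k _; rewrite rho0 ?mulr0.
move: fl; rewrite leq_eqVlt => /predU1P[fl | fl].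
  move: sum_le; rewrite fl subrr addr0; have := rho_le_half l; lra.
have [_ wrap] := @rho_gap f l ltac:(by rewrite fl) rf rl.
lra.
Qed.

End CirclePacking.

Section Trapezoid.
Variable R : realFieldType.
Implicit Types (P : nat -> R) (f : R -> R).

Definition trapezoid P n f :=
  \sum_(k < n) (P k.+1 - P k) * (f (P k) + f (P k.+1)) / 2.

Lemma trapezoid_sum (I : finType) P n (F : I -> R -> R) :
  \sum_(i : I) trapezoid P n (F i) = trapezoid P n (fun s => \sum_(i : I) F i s).
Proof.
rewrite exchange_big; apply: eq_bigr => k _ /=.
by rewrite -mulr_suml -mulr_sumr big_split.
Qed.

Lemma trapezoid_le_const P n f M : {homo P : i j / (i <= j)%N >-> i <= j} ->
  (forall k, (k <= n)%N -> f (P k) <= M) -> trapezoid P n f <= (P n - P 0) * M.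
Proof.
move=> Pmono fM.
rewrite -(telescope_sumr (fun k => P k) (leq0n n)) big_mkord mulr_suml.
apply: ler_sum => k _.
have dP : 0 <= P k.+1 - P k by rewrite subr_ge0 Pmono.
have := fM k (ltnW (ltn_ord k)); have := fM k.+1 (ltn_ord k).
nra.
Qed.

(* The tent is convex on either side of its peak [P a], which is a node, so
   each trapezoid overestimates the area of its slice of the tent. *)
Lemma tent_area_le_trapezoid L g P n a : 0 <= g -> 2 * g <= L ->
  P 0%N = 0 -> P n = L -> {homo P : i j / (i <= j)%N >-> i <= j} -> (a <= n)%N ->
  g ^+ 2 <= trapezoid P n (tent L g (P a)).
Proof.
move=> g0 gL P0 Pn Pmono an.
pose p := P a.
pose area s := if s <= p then - tent_profile_area L g (p - s)
               else tent_profile_area L g (s - p).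
have Pb k : (k <= n)%N -> 0 <= P k <= L by move=> kn; rewrite -P0 -Pn !Pmono.
have pb : 0 <= p <= L by exact: Pb.
have area_ge s : p <= s -> area s = tent_profile_area L g (s - p).
  rewrite /area => ps; case: ifP => // sp.
  have -> : s = p by apply/eqP; rewrite eq_le sp ps.
  by rewrite subrr tent_profile_area0 // oppr0.
have area_le s : s <= p -> area s = - tent_profile_area L g (p - s) by rewrite /area => ->.
have -> : g ^+ 2 = \sum_(k < n) (area (P k.+1) - area (P k)).
  rewrite -(big_mkord xpredT (fun k => area (P k.+1) - area (P k))).
  rewrite (telescope_sumr (fun k => area (P k))) // Pn P0.
  case/andP: (pb) => p0 pL.
  rewrite area_ge // area_le // subr0 opprK addrC tent_profile_areaC //.
apply: ler_sum => k _.
have Pk : P k <= P k.+1 by exact: Pmono.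
have Pkb := Pb k (ltnW (ltn_ord k)); have Pk1b := Pb k.+1 (ltn_ord k).
rewrite !tentE //.
move: Pkb Pk1b pb => /andP[? ?] /andP[? ?] /andP[p0 pL].
case: (ltnP k a) => ka.
  have Pkp : P k.+1 <= p by exact: Pmono.
  rewrite !area_le ?(le_trans Pk) // !ler0_norm ?subr_le0 ?(le_trans Pk) // !opprB.
  have := tent_profile_area_trapezoid (x := p - P k.+1) (y := p - P k) g0 gL.
  move=> /(_ ltac:(lra) ltac:(lra) ltac:(lra)); lra.
have pPk : p <= P k by exact: Pmono.
rewrite !area_ge ?(le_trans pPk) // !ger0_norm ?subr_ge0 ?(le_trans pPk) //.
have := tent_profile_area_trapezoid (x := P k - p) (y := P k.+1 - p) g0 gL.
move=> /(_ ltac:(lra) ltac:(lra) ltac:(lra)); lra.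
Qed.

End Trapezoid.

Lemma ordS_neq n (i : 'I_n) : (1 < n)%N -> ordS i != i.
Proof.
move=> n_gt1; apply/eqP => /(congr1 val) /=.
case: (ltnP i.+1 n) => [lt_in | ge_in]; first by rewrite modn_small //; lia.
have -> : i.+1 = n by apply/eqP; rewrite eqn_leq ge_in ltn_ord.
by rewrite modnn; lia.
Qed.

Section MetricDistance.
Variables (R : realFieldType) (n : nat) (c : 'I_n -> 'I_n -> R).
Hypothesis c_metric : metric c.

(* [c] is unconstrained on the diagonal; [dist] is [0] there. *)
Definition dist (x y : 'I_n) := if x == y then 0 else c x y.

Lemma dist_neq x y : x != y -> dist x y = c x y.
Proof. by rewrite /dist => /negbTE ->. Qed.

Lemma dist_xx x : dist x x = 0.
Proof. by rewrite /dist eqxx. Qed.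

Lemma distC x y : dist x y = dist y x.
Proof.
rewrite /dist eq_sym; case: eqVneq => // yx.
by case: c_metric => c_sym _ _; rewrite c_sym // eq_sym.
Qed.

Lemma dist_ge0 x y : 0 <= dist x y.
Proof. by rewrite /dist; case: eqVneq => // xy; case: c_metric => _ c_ge0 _; apply: c_ge0. Qed.

Lemma dist_triangle x y z : dist x z <= dist x y + dist y z.
Proof.
have [->|xz] := eqVneq x z; first by rewrite dist_xx addr_ge0 ?dist_ge0.
have [->|xy] := eqVneq x y; first by rewrite dist_xx add0r.
have [->|yz] := eqVneq y z; first by rewrite dist_xx addr0.
by rewrite !dist_neq //; case: c_metric => _ _; apply.
Qed.

End MetricDistance.

Section TourPositions.
Variables (R : realFieldType) (N : nat) (c : 'I_N.+1 -> 'I_N.+1 -> R)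
  (tau : 'I_N.+1 -> 'I_N.+1).
Hypotheses (c_metric : metric c) (tau_inj : injective tau).
Local Notation n := N.+1.
Local Notation d := (dist c).

Definition city (k : nat) := tau (inord k).

Definition leg (k : nat) := d (city k) (city (k.+1 %% n)).

Definition arc (k : nat) := \sum_(j < k) leg j.

Definition perimeter := arc n.

Definition position (v : 'I_n) := arc (invF tau_inj v).

Lemma arc0 : arc 0 = 0.
Proof. by rewrite /arc big_ord0. Qed.

Lemma arcS k : arc k.+1 = arc k + leg k.
Proof. by rewrite /arc big_ord_recr. Qed.

Lemma arc_mono : {homo arc : i j / (i <= j)%N >-> i <= j}.
Proof.
move=> i j /subnK <-; elim: (j - i)%N => [|k IH]; first by rewrite add0n.
by rewrite addSn arcS (le_trans IH) // lerDl dist_ge0.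
Qed.

Lemma arc_bound k : (k <= n)%N -> 0 <= arc k <= perimeter.
Proof. by move=> kn; rewrite -arc0 !arc_mono. Qed.

Lemma position_bound v : 0 <= position v <= perimeter.
Proof. exact/arc_bound/ltnW. Qed.

Lemma perimeterE : (0 < N)%N -> tour_len c tau = perimeter.
Proof.
move=> N_gt0; rewrite /tour_len /perimeter /arc; apply: eq_bigr => i _.
rewrite /leg /city inord_val.
have -> : inord (i.+1 %% n) = ordS i by apply: val_inj; rewrite /= inordK // ltn_pmod.
by rewrite dist_neq // (inj_eq tau_inj) eq_sym ordS_neq.
Qed.

Lemma dist_le_arc i j : (i <= j < n)%N -> d (city i) (city j) <= arc j - arc i.
Proof.
case/andP=> /subnK <-; elim: (j - i)%N => [|k IH] lt_kin.
  by rewrite add0n dist_xx subrr.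
rewrite addSn arcS; have := IH (ltnW lt_kin).
have := dist_triangle c_metric (city i) (city (k + i)) (city (k + i).+1).
by rewrite /leg modn_small //; lra.
Qed.

Lemma dist_le_wrap i j : (i <= j < n)%N ->
  d (city j) (city i) <= perimeter - (arc j - arc i).
Proof.
case/andP=> ij jn.
have to_last := @dist_le_arc j N ltac:(by rewrite -ltnS jn /=).
have from_first := @dist_le_arc 0 i ltac:(by rewrite /= (leq_ltn_trans ij jn)).
have last_leg : leg N = d (city N) (city 0) by rewrite /leg modnn.
have := dist_triangle c_metric (city j) (city N) (city i).
have := dist_triangle c_metric (city N) (city 0) (city i).
move: from_first; rewrite /perimeter arcS arc0 last_leg; lra.
Qed.

Lemma dist_le_circ_dist x y : d x y <= circ_dist perimeter (position x) (position y).
Proof.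
have city_invF v : v = city (invF tau_inj v) by rewrite /city inord_val f_invF.
rewrite /position {1}(city_invF x) {1}(city_invF y).
move: (invF tau_inj x) (invF tau_inj y) => i j.
wlog ij : i j / (i <= j)%N.
  by move=> le_dist; case: (leqP i j) => [|/ltnW] /le_dist //; rewrite distC // circ_distC.
have ijn : (i <= j < n)%N by rewrite ij ltn_ord.
rewrite circ_distE ?arc_mono // le_min dist_le_arc //=.
by rewrite distC // dist_le_wrap.
Qed.

Section TwoOptimalTour.
Variable t : 'I_n -> 'I_n.
Hypotheses (N_gt0 : (0 < N)%N) (t_inj : injective t) (t_two_opt : two_optimal c t).
Local Notation L := perimeter.

Definition edge_len (m : 'I_n) := d (t m) (t (ordS m)).

Definition edge_tent (m : 'I_n) := tent L (edge_len m) (position (t m)).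

Lemma edge_len_ge0 m : 0 <= edge_len m.
Proof. exact: dist_ge0. Qed.

Lemma edge_len_le_half m : 2 * edge_len m <= L.
Proof.
have := dist_le_circ_dist (t m) (t (ordS m)).
have := circ_dist_le_half L (position (t m)) (position (t (ordS m))).
rewrite /edge_len; lra.
Qed.

Lemma tour_sqlenE : tour_sqlen c t = \sum_(m < n) edge_len m ^+ 2.
Proof.
by apply: eq_bigr => m _; rewrite /edge_len dist_neq // (inj_eq t_inj) eq_sym ordS_neq.
Qed.

Lemma two_optimal_dist m q : m != q ->
  edge_len m + edge_len q <= d (t m) (t q) + d (t (ordS m)) (t (ordS q)).
Proof.
move=> mq; have neq_ordS (x : 'I_n) : x != ordS x by rewrite eq_sym ordS_neq.
rewrite /edge_len !dist_neq ?(inj_eq t_inj) ?(inj_eq (@ordS_inj _)) //.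
exact: t_two_opt.
Qed.

Lemma edge_tents_disjoint m q s : 0 <= s <= L -> m != q ->
  0 < edge_tent m s -> 0 < edge_tent q s ->
  edge_tent m s + edge_tent q s <=
  circ_dist L (position (t (ordS m))) (position (t (ordS q))).
Proof.
move=> sb mq.
have := circ_dist_triangle (position_bound (t m)) sb (position_bound (t q)).
have := circ_distC L (position (t m)) s.
have := dist_le_circ_dist (t m) (t q).
have := dist_le_circ_dist (t (ordS m)) (t (ordS q)).
have := two_optimal_dist mq.
rewrite /edge_tent /tent; case_piecewise; lra.
Qed.

Lemma edge_tents_le_half s : 0 <= s <= L -> \sum_(m < n) 2 * edge_tent m s <= L.
Proof.
move=> sb.
(* Ranking edges by the position of their head along [tau] sorts the centres
   of their intervals. *)
pose succ_rank m := invF tau_inj (t (ordS m)).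
have succ_rank_inj : injective succ_rank.
  by move=> a b /(can_inj (f_invF tau_inj)) /t_inj /ordS_inj.
pose edge_at := invF succ_rank_inj.
have position_succ k : (k < n)%N -> position (t (ordS (edge_at (inord k)))) = arc k.
  by move=> kn; rewrite /position -/(succ_rank _) f_invF inordK.
rewrite (reindex_inj (can_inj (f_invF succ_rank_inj))) /=.
pose rho k := edge_tent (edge_at (inord k)) s.
have -> : \sum_(j < n) 2 * edge_tent (edge_at j) s = \sum_(j < n) 2 * rho j.
  by apply: eq_bigr => j _; rewrite /rho inord_val.
apply: (circle_packing _ arc_mono).
- by have /andP[] := arc_bound (leqnn n).
- by move=> k; apply: tent_ge0.
- move=> k; set m := edge_at (inord k).
  have := tent_le (edge_len_ge0 m) (position_bound (t m)) sb.
  have := edge_len_le_half m.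
  rewrite /rho /edge_tent; lra.
move=> k l /andP[kl ln] rk rl; have kn := ltn_trans kl ln.
rewrite -position_succ // -position_succ //.
apply: edge_tents_disjoint => //; apply: contraTneq kl => /(can_inj (f_invF succ_rank_inj)).
by move/(congr1 (@nat_of_ord n)); rewrite !inordK // => ->; rewrite ltnn.
Qed.

Lemma two_optimal_sqlen_le : 2 * tour_sqlen c t <= L ^+ 2.
Proof.
have edge_area m : edge_len m ^+ 2 <= trapezoid arc n (edge_tent m).
  exact: tent_area_le_trapezoid (edge_len_ge0 m) (edge_len_le_half m) arc0 erefl
    arc_mono (ltnW (ltn_ord _)).
have tents_le k : (k <= n)%N -> \sum_(m < n) edge_tent m (arc k) <= L / 2.
  by move=> kn; have := edge_tents_le_half (arc_bound kn); rewrite -mulr_sumr; lra.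
have areas_le : \sum_(m < n) edge_len m ^+ 2 <= \sum_(m < n) trapezoid arc n (edge_tent m).
  exact: ler_sum.
have := trapezoid_le_const (f := fun s => \sum_(m < n) edge_tent m s) arc_mono tents_le.
rewrite -trapezoid_sum arc0 subr0 -/perimeter tour_sqlenE; nra.
Qed.

End TwoOptimalTour.
End TourPositions.

Unset Implicit Arguments.

Theorem mainTheorem4 (R : realFieldType) (n : nat) (c : 'I_n -> 'I_n -> R)
  (Tstar T' : 'I_n -> 'I_n) :
  (3 <= n)%N -> metric c -> shortest_tour c Tstar ->
  is_tour T' -> two_optimal c T' ->
  2 * tour_sqlen c T' <= (tour_len c Tstar) ^+ 2.
Proof.
case: n c Tstar T' => [|N] // c Tstar T' n_ge3 c_metric [Tstar_tour _] T'_tour T'_two_opt.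
have N_gt0 : (0 < N)%N by rewrite -ltnS (leq_trans _ n_ge3).
rewrite perimeterE //.
exact: two_optimal_sqlen_le.
Qed.
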